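(* Let $\overline f:[a,b]\to\mathbb{R}_\mathcal{I}$ be continuous on $[a,b]$. Then $\overline f$ is interval Riemann integrable on $[a,b]$.
   Context: $\mathbb{R}_\mathcal{I}$ denotes the set of all closed intervals $\overline a=[a_l,a_r]$ with $a_l<a_r$ (real numbers are not regarded as degenerate intervals). Each $\overline a$ is written as $\overline a=\langle a_c;a_w\rangle$ with center $a_c=\frac{a_l+a_r}{2}$ and radius $a_w=\frac{a_r-a_l}{2}>0$. The operations on $\mathbb{R}_\mathcal{I}$ are: addition $\overline a+\overline b=\langle a_c+b_c;\,a_w b_w\rangle$ and scalar multiplication $k\overline a=\langle k a_c;\,a_w^{k}\rangle$ for $k\in\mathbb{R}$. The distance is $d(\overline a,\overline b)=\sqrt{(a_c-b_c)^2+(\ln a_w-\ln b_w)^2}$. An interval-valued function $\overline f(t)=\langle f_c(t);f_w(t)\rangle$ on $[a,b]$ is continuous at $x$ if for every $\varepsilon>0$ there is $\delta>0$ with $d(\overline f(x),\overline f(y))<\varepsilon$ whenever $y\in[a,b]$, $|y-x|<\delta$; continuous on $[a,b]$ means continuous at every point. $\overline f$ is interval Riemann integrable on $[a,b]$ with integral $\overline A\in\mathbb{R}_\mathcal{I}$, written $\overline A=(IR)\int_a^b\overline f(t)\,\mathrm{d}t$, if for every $\varepsilon>0$ there is $\delta>0$ such that for every partition $a=t_0<t_1<\dots<t_n=b$ with $t_i-t_{i-1}<\delta$ and every choice of tags $\xi_i\in[t_{i-1},t_i]$, one has $d\big(\sum_{i=1}^n \overline f(\xi_i)(t_i-t_{i-1}),\overline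 A\big)<\varepsilon$, where the sum and scalar products use the operations above. *)

From Stdlib Require Import Reals Lra.
Open Scope R_scope.

(* An element of R_I: an interval <c; w> with center c and radius w > 0. *)
Record RI : Type := mkRI { rc : R; rw : R; rw_pos : 0 < rw }.

Definition ri_add (x y : RI) : RI :=
  mkRI (rc x + rc y) (rw x * rw y) (Rmult_lt_0_compat _ _ (rw_pos x) (rw_pos y)).

Definition ri_scal (k : R) (x : RI) : RI :=
  mkRI (k * rc x) (Rpower (rw x) k) (exp_pos _).

Definition ri_zero : RI := mkRI 0 1 Rlt_0_1.

Definition ri_dist (x y : RI) : R :=
  sqrt ((rc x - rc y) ^ 2 + (ln (rw x) - ln (rw y)) ^ 2).

Definition ri_continuous_at (f : R -> RI) (a b x : R) : Prop :=
  forall eps, 0 < eps -> exists delta, 0 < delta /\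
    forall y, a <= y <= b -> Rabs (y - x) < delta -> ri_dist (f x) (f y) < eps.

Definition ri_continuous_on (f : R -> RI) (a b : R) : Prop :=
  forall x, a <= x <= b -> ri_continuous_at f a b x.

Fixpoint ri_riemann_sum (f : R -> RI) (t xi : nat -> R) (n : nat) : RI :=
  match n with
  | O => ri_zero
  | S m => ri_add (ri_riemann_sum f t xi m) (ri_scal (t (S m) - t m) (f (xi (S m))))
  end.

Definition tagged_partition (a b delta : R) (n : nat) (t xi : nat -> R) : Prop :=
  t O = a /\ t n = b /\
  (forall i, (1 <= i <= n)%nat -> t (i - 1)%nat < t i /\ t i - t (i - 1)%nat < delta
                                 /\ t (i - 1)%nat <= xi i <= t i).

Definition ri_integral (f : R -> RI) (a b : R) (A : RI) : Prop :=
  forall eps, 0 < eps -> exists delta, 0 < delta /\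
    forall n t xi, tagged_partition a b delta n t xi ->
      ri_dist (ri_riemann_sum f t xi n) A < eps.

Definition ri_integrable (f : R -> RI) (a b : R) : Prop :=
  exists A : RI, ri_integral f a b A.

(* The map <c; w> |-> (c, ln w) is an isometry from R_I onto the Euclidean
   plane which turns the interval operations into the vector operations of
   R^2.  Interval Riemann sums of f are therefore pairs of real Riemann sums of
   the two continuous real functions c_f and ln w_f, and the interval integral
   is <int c_f; exp (int ln w_f)>. *)
From Stdlib Require Import Reals Lra Lia.
From Coquelicot Require Import Coquelicot.
Open Scope R_scope.

Fixpoint rsum (g : R -> R) (t xi : nat -> R) (n : nat) : R :=
  match n with
  | O => 0
  | S m => rsum g t xi m + (t (S m) - t m) * g (xi (S m))
  end.

Definition continuous_on_interval (g : R -> R) (a b : R) : Prop :=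
  forall x, a <= x <= b -> forall eps, 0 < eps -> exists delta, 0 < delta /\
    forall y, a <= y <= b -> Rabs (y - x) < delta -> Rabs (g x - g y) < eps.

Definition riemann_integral (g : R -> R) (a b I : R) : Prop :=
  forall eps, 0 < eps -> exists delta, 0 < delta /\
    forall n t xi, tagged_partition a b delta n t xi -> Rabs (rsum g t xi n - I) < eps.

Lemma tagged_partition_bounds a b d n t xi :
  tagged_partition a b d n t xi -> forall i, (i <= n)%nat -> a <= t i <= b.
Proof.
  intros [Ht0 [Htn Hstep]].
  assert (Hincr : forall i, (i < n)%nat -> t i < t (S i)).
  { intros i Hi. destruct (Hstep (S i)) as [Hlt _]; [lia|].
    now replace (S i - 1)%nat with i in Hlt by lia. }
  assert (Hlow : forall i, (i <= n)%nat -> a <= t i).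
  { induction i as [|i IH]; intros Hi; [lra|].
    specialize (IH ltac:(lia)). specialize (Hincr i ltac:(lia)). lra. }
  assert (Hup : forall k i, (i + k = n)%nat -> t i <= b).
  { induction k as [|k IH]; intros i Hi.
    - replace i with n by lia. lra.
    - specialize (IH (S i) ltac:(lia)). specialize (Hincr i ltac:(lia)). lra. }
  intros i Hi. split; [now apply Hlow | now apply (Hup (n - i)%nat); lia].
Qed.

Lemma tagged_partition_tags a b d n t xi :
  tagged_partition a b d n t xi -> forall i, (1 <= i <= n)%nat -> a <= xi i <= b.
Proof.
  intros HP i Hi.
  pose proof (tagged_partition_bounds _ _ _ _ _ _ HP (i - 1) ltac:(lia)).
  pose proof (tagged_partition_bounds _ _ _ _ _ _ HP i ltac:(lia)).
  destruct HP as [_ [_ Hstep]]. destruct (Hstep i Hi) as [_ [_ Hxi]]. lra.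
Qed.

Lemma tagged_partition_mesh_le a b d d' n t xi :
  d <= d' -> tagged_partition a b d n t xi -> tagged_partition a b d' n t xi.
Proof.
  intros Hdd' [Ht0 [Htn Hstep]]. split; [|split]; auto.
  intros i Hi. destruct (Hstep i Hi) as [H1 [H2 H3]]. repeat split; auto; lra.
Qed.

Lemma rsum_ext_partition g h a b d n t xi :
  (forall x, a <= x <= b -> g x = h x) ->
  tagged_partition a b d n t xi -> rsum g t xi n = rsum h t xi n.
Proof.
  intros Hgh HP.
  assert (Hm : forall m, (m <= n)%nat -> rsum g t xi m = rsum h t xi m).
  { induction m as [|m IH]; intros Hm; simpl; [reflexivity|].
    rewrite IH, Hgh by (lia || apply (tagged_partition_tags _ _ _ _ _ _ HP); lia).
    reflexivity. }
  now apply Hm.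
Qed.

(* Composing with [clamp a b] extends a function continuous on [a, b] to one
   continuous on all of R, as Coquelicot's integration lemmas require. *)
Definition clamp (a b x : R) : R := Rmax a (Rmin b x).

Lemma clamp_in a b x : a <= b -> a <= clamp a b x <= b.
Proof. intros; unfold clamp, Rmax, Rmin; repeat destruct Rle_dec; lra. Qed.

Lemma clamp_id a b x : a <= x <= b -> clamp a b x = x.
Proof. intros; unfold clamp, Rmax, Rmin; repeat destruct Rle_dec; lra. Qed.

Lemma clamp_lipschitz a b x y :
  a <= b -> Rabs (clamp a b y - clamp a b x) <= Rabs (y - x).
Proof.
  intros; unfold clamp, Rmax, Rmin; repeat destruct Rle_dec;
    unfold Rabs; repeat destruct Rcase_abs; lra.
Qed.

Lemma continuous_clamp_comp g a b :
  a <= b -> continuous_on_interval g a b ->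
  forall x, continuous (fun y => g (clamp a b y)) x.
Proof.
  intros Hab Hg x. apply continuity_pt_filterlim. intros eps Heps.
  destruct (Hg (clamp a b x) (clamp_in a b x Hab) eps Heps) as [d [Hd Hnear]].
  exists d; split; [exact Hd|]. intros y [_ Hy]. simpl in Hy |- *. unfold R_dist in *.
  rewrite Rabs_minus_sym. apply Hnear; [now apply clamp_in|].
  eapply Rle_lt_trans; [now apply clamp_lipschitz | exact Hy].
Qed.

Lemma continuous_uniform_on_interval (h : R -> R) a b e :
  (forall x, continuous h x) -> 0 < e -> exists d, 0 < d /\
    forall x y, a <= x <= b -> a <= y <= b -> Rabs (y - x) < d -> Rabs (h y - h x) < e.
Proof.
  intros Hh He.
  destruct (unifcont_normed_1d (V := R_NormedModule) h a b (fun x _ => Hh x)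
              (mkposreal e He)) as [[d Hd] Hunif].
  exists d; split; [exact Hd|]. intros x y Hx Hy Hxy. exact (Hunif x y Hx Hy Hxy).
Qed.

Lemma RInt_tag_error (h : R -> R) u v c e :
  u <= v -> (forall x, continuous h x) ->
  (forall s, u <= s <= v -> Rabs (h c - h s) <= e) ->
  Rabs ((v - u) * h c - RInt h u v) <= (v - u) * e.
Proof.
  intros Huv Hh Hclose.
  assert (Hex : forall g, (forall x, continuous g x) -> ex_RInt g u v)
    by (intros g Hg; apply (ex_RInt_continuous (V := R_CompleteNormedModule)); auto).
  replace ((v - u) * h c - RInt h u v) with (RInt (fun s => h c - h s) u v).
  - apply abs_RInt_le_const; auto. apply Hex. intros x.
    apply (continuous_minus (fun _ => h c) h); [apply continuous_const | apply Hh].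
  - rewrite (RInt_minus (fun _ => h c) h) by (apply ex_RInt_const || now apply Hex).
    now rewrite RInt_const.
Qed.

Lemma rsum_RInt_error (h : R -> R) a b d e n t xi :
  (forall x, continuous h x) ->
  (forall x y, a <= x <= b -> a <= y <= b -> Rabs (y - x) < d -> Rabs (h y - h x) <= e) ->
  tagged_partition a b d n t xi ->
  Rabs (rsum h t xi n - RInt h a b) <= e * (b - a).
Proof.
  intros Hh Hunif HP.
  pose proof (tagged_partition_bounds _ _ _ _ _ _ HP) as Hbd.
  destruct HP as [Ht0 [Htn Hstep]].
  assert (Hex : forall u v, ex_RInt h u v)
    by (intros; apply (ex_RInt_continuous (V := R_CompleteNormedModule)); auto).
  assert (Hm : forall m, (m <= n)%nat ->
                 Rabs (rsum h t xi m - RInt h a (t m)) <= e * (t m - a)).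
  { induction m as [|m IH]; intros Hm.
    - simpl. rewrite Ht0, RInt_point. unfold zero; simpl.
      rewrite Rminus_0_r, Rabs_R0. lra.
    - destruct (Hstep (S m)) as [Hlt [Hmesh Hxi]]; [lia|].
      replace (S m - 1)%nat with m in * by lia.
      specialize (IH ltac:(lia)).
      pose proof (Hbd m ltac:(lia)). pose proof (Hbd (S m) Hm).
      assert (Hloc : Rabs ((t (S m) - t m) * h (xi (S m)) - RInt h (t m) (t (S m)))
                     <= (t (S m) - t m) * e).
      { apply RInt_tag_error; auto; [lra|]. intros s Hs.
        rewrite Rabs_minus_sym. apply Hunif; try lra.
        unfold Rabs; destruct Rcase_abs; lra. }
      simpl rsum. rewrite <- (RInt_Chasles h a (t m) (t (S m))) by apply Hex.
      unfold plus; simpl.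
      replace (rsum h t xi m + (t (S m) - t m) * h (xi (S m))
               - (RInt h a (t m) + RInt h (t m) (t (S m))))
        with ((rsum h t xi m - RInt h a (t m))
              + ((t (S m) - t m) * h (xi (S m)) - RInt h (t m) (t (S m)))) by ring.
      eapply Rle_trans; [apply Rabs_triang|]. lra. }
  specialize (Hm n (le_n n)). now rewrite Htn in Hm.
Qed.

Lemma continuous_on_interval_riemann_integrable g a b :
  a <= b -> continuous_on_interval g a b -> exists I, riemann_integral g a b I.
Proof.
  intros Hab Hg.
  set (h := fun x => g (clamp a b x)).
  assert (Hh : forall x, continuous h x) by now apply continuous_clamp_comp.
  exists (RInt h a b). intros eps Heps.
  set (e := eps / (b - a + 1)).
  assert (He : 0 < e) by (apply Rdiv_lt_0_compat; lra).
  assert (Heba : e * (b - a) < eps).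
  { unfold e. apply (Rmult_lt_reg_r (b - a + 1)); [lra|].
    field_simplify; lra. }
  destruct (continuous_uniform_on_interval h a b e Hh He) as [d [Hd Hunif]].
  exists d; split; [exact Hd|]. intros n t xi HP.
  rewrite (rsum_ext_partition g h a b d n t xi) by
    (auto; intros x Hx; unfold h; now rewrite clamp_id).
  eapply Rle_lt_trans; [|exact Heba].
  apply (rsum_RInt_error h a b d e n t xi); auto.
  intros x y Hx Hy Hxy. now apply Rlt_le, Hunif.
Qed.

Lemma Rabs_le_sqrt_sum_sq p q : Rabs p <= sqrt (p ^ 2 + q ^ 2).
Proof.
  rewrite <- sqrt_Rsqr_abs. apply sqrt_le_1_alt.
  unfold Rsqr. pose proof (pow2_ge_0 q). nra.
Qed.

Lemma sqrt_sum_sq_le p q : sqrt (p ^ 2 + q ^ 2) <= Rabs p + Rabs q.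
Proof.
  pose proof (Rabs_pos p). pose proof (Rabs_pos q).
  rewrite <- (sqrt_pow2 (Rabs p + Rabs q)) by lra. apply sqrt_le_1_alt.
  rewrite <- (pow2_abs p), <- (pow2_abs q). nra.
Qed.

Lemma ri_dist_ge_rc x y : Rabs (rc x - rc y) <= ri_dist x y.
Proof. apply Rabs_le_sqrt_sum_sq. Qed.

Lemma ri_dist_ge_ln_rw x y : Rabs (ln (rw x) - ln (rw y)) <= ri_dist x y.
Proof. unfold ri_dist. rewrite Rplus_comm. apply Rabs_le_sqrt_sum_sq. Qed.

Lemma ri_continuous_on_comp (phi : RI -> R) f a b :
  (forall x y, Rabs (phi x - phi y) <= ri_dist x y) ->
  ri_continuous_on f a b -> continuous_on_interval (fun x => phi (f x)) a b.
Proof.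
  intros Hphi Hf x Hx eps Heps.
  destruct (Hf x Hx eps Heps) as [d [Hd Hnear]].
  exists d; split; [exact Hd|]. intros y Hy Hxy.
  eapply Rle_lt_trans; [apply Hphi | now apply Hnear].
Qed.

Lemma rc_ri_riemann_sum f t xi n :
  rc (ri_riemann_sum f t xi n) = rsum (fun x => rc (f x)) t xi n.
Proof. induction n as [|n IH]; simpl; [reflexivity|]. rewrite IH. ring. Qed.

Lemma ln_rw_ri_riemann_sum f t xi n :
  ln (rw (ri_riemann_sum f t xi n)) = rsum (fun x => ln (rw (f x))) t xi n.
Proof.
  induction n as [|n IH]; simpl; [apply ln_1|].
  rewrite ln_mult by (apply rw_pos || apply exp_pos).
  rewrite IH. unfold Rpower. rewrite ln_exp. ring.
Qed.

Lemma ri_integral_of_components f a b Ic Il :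
  riemann_integral (fun x => rc (f x)) a b Ic ->
  riemann_integral (fun x => ln (rw (f x))) a b Il ->
  ri_integral f a b (mkRI Ic (exp Il) (exp_pos Il)).
Proof.
  intros Hc Hl eps Heps.
  destruct (Hc (eps / 2) ltac:(lra)) as [dc [Hdc Kc]].
  destruct (Hl (eps / 2) ltac:(lra)) as [dl [Hdl Kl]].
  exists (Rmin dc dl); split; [now apply Rmin_pos|]. intros n t xi HP.
  specialize (Kc n t xi (tagged_partition_mesh_le _ _ _ _ _ _ _ (Rmin_l dc dl) HP)).
  specialize (Kl n t xi (tagged_partition_mesh_le _ _ _ _ _ _ _ (Rmin_r dc dl) HP)).
  unfold ri_dist; simpl. rewrite ln_exp, rc_ri_riemann_sum, ln_rw_ri_riemann_sum.
  eapply Rle_lt_trans; [apply sqrt_sum_sq_le | lra].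
Qed.

Theorem theorem5p2 (a b : R) (f : R -> RI) :
  a < b -> ri_continuous_on f a b -> ri_integrable f a b.
Proof.
  intros Hab Hf.
  destruct (continuous_on_interval_riemann_integrable (fun x => rc (f x)) a b)
    as [Ic Hc]; [lra | exact (ri_continuous_on_comp rc f a b ri_dist_ge_rc Hf)|].
  destruct (continuous_on_interval_riemann_integrable (fun x => ln (rw (f x))) a b)
    as [Il Hl]; [lra | exact (ri_continuous_on_comp _ f a b ri_dist_ge_ln_rw Hf)|].
  exists (mkRI Ic (exp Il) (exp_pos Il)).
  now apply ri_integral_of_components.
Qed.
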